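(* Let $((f_t),(g_t),(h_t))$ be a $W_{1,+}$-geodesic on $G$ with associated function $m$. For any vertices $x_0\le x_1\le\cdots\le x_m$, $$m(x_0,\dots,x_m)=\frac{m(x_0,x_1)\cdots m(x_{m-1},x_m)}{m(x_1)\cdots m(x_{m-1})}.$$
   Context: $G$ is a connected, locally finite graph with graph distance $d$; geodesics are paths of adjacent vertices $\gamma(0),\dots,\gamma(n)$ with $n=d(\gamma(0),\gamma(n))$, $e_0(\gamma)=\gamma(0)$, $e_1(\gamma)=\gamma(n)$. For finitely supported probability distributions $f_0,f_1$: $\Pi_1(f_0,f_1)$ = couplings minimizing $\sum d(x,y)\pi(x,y)$ (minimum $W_1$), $\mathcal{C}(f_0,f_1)=\{(x,y):\pi(x,y)>0$ for some $\pi\in\Pi_1\}$; $W_1$-orientation: adjacent $x,y$ get $x\to y$ iff some geodesic $\gamma$ with $(e_0(\gamma),e_1(\gamma))\in\mathcal{C}(f_0,f_1)$ has $\gamma(k)=x,\gamma(k+1)=y$. Oriented paths: $\gamma(i)\to\gamma(i+1)$; $x\le y$ iff an oriented path (possibly of length $0$) goes from $x$ to $y$; $\gamma_i=\gamma(i)$. $E(G)=\{(xy):x\to y\}$, $T(G)$ the triples $x_0\to x_1\to x_2$, $\mathcal{F}(x)=\{y:x\to y\}$, $\mathcal{E}(x)=\{y:y\to x\}$; $\nabla g(x_1)=\sum_{\mathcal{F}(x_1)}g(x_1x_2)-\sum_{\mathcal{E}(x_1)}g(x_0x_1)$, $\nabla h(x_1x_2)=\sum_{x_3\in\mathcal{F}(x_2)}h(x_1x_2x_3)-\sum_{x_0\in\mathcal{E}(x_1)}h(x_0x_1x_2)$.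 $W_{1,+}$-geodesic: a family $(f_t)_{t\in[0,1]}$ from $f_0$ to $f_1$ with $W_1(f_s,f_t)=|t-s|W_1(f_0,f_1)$, differentiable in $t$, with $g_t$ on $E(G)$, $h_t$ on $T(G)$, $\partial_tf_t=-\nabla g_t$, $\partial_tg_t=-\nabla h_t$, $g_t>0$, $f_t(x_1)h_t(x_0x_1x_2)=g_t(x_0x_1)g_t(x_1x_2)$. $C_\gamma(t)=f_t(\gamma_0)$ if $L(\gamma)=0$, $g_t(\gamma_0\gamma_1)$ if $L(\gamma)=1$, $\prod_{i=0}^{n-1}g_t(\gamma_i\gamma_{i+1})/\prod_{j=1}^{n-1}f_t(\gamma_j)$ if $n\ge2$. $\mathcal{A}=\{x:\mathcal{E}(x)=\emptyset\}$, $\mathcal{B}=\{x:\mathcal{F}(x)=\emptyset\}$; an oriented path is extremal if it starts in $\mathcal{A}$ and ends in $\mathcal{B}$. For $z_1\le\cdots\le z_p$, $m(z_1,\dots,z_p)=\sum_\gamma C_\gamma(0)$, summed over extremal oriented paths $\gamma$ with indices $k_1\le\cdots\le k_p$ such that $\gamma(k_i)=z_i$ (for extremal $\gamma$, $C_\gamma(t)$ is independent of $t$). *)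

From HB Require Import structures.
From mathcomp Require Import all_boot all_order all_algebra.
From mathcomp Require Import boolp classical_sets functions cardinality fsbigop.
From mathcomp Require Import reals topology normedtype derive.

Set Implicit Arguments.
Unset Strict Implicit.
Unset Printing Implicit Defensive.

Import Order.TTheory GRing.Theory Num.Theory numFieldNormedType.Exports.
Local Open Scope classical_set_scope.
Local Open Scope ring_scope.

Section W1Geodesics.
Variable R : realType.
Variable V : choiceType.
Variable adj : rel V.

Definition symmetric_graph := forall x y, adj x y = adj y x.
Definition irreflexive_graph := forall x, ~~ adj x x.
Definition locally_finite := forall x, finite_set [set y | adj x y].

Definition walk_len (x y : V) (n : nat) : Prop :=
  exists s : seq V, [/\ size s = n, path adj x s & last x s = y].
Definition connected_graph := forall x y, exists n, walk_len x y n.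

(* graph distance (least length of a walk; 0 if unreachable, which never
   happens for a connected graph) *)
Definition dist (x y : V) : nat :=
  match pselect (exists n, (fun n => `[< walk_len x y n >]) n) with
  | left H => ex_minn H
  | right _ => 0%N
  end.

(* geodesic gamma(0),...,gamma(n): consecutive vertices adjacent and
   n = d(gamma(0), gamma(n)); e0 = head, e1 = last *)
Definition is_geodesic (gam : seq V) : Prop :=
  match gam with
  | x :: s => path adj x s /\ size s = dist x (last x s)
  | [::] => False
  end.

Definition is_fdist (f : V -> R) : Prop :=
  [/\ forall x, 0 <= f x, finite_set [set x | f x != 0]
    & \sum_(x \in [set: V]) f x = 1].

Definition is_coupling (f0 f1 : V -> R) (pi : V * V -> R) : Prop :=
  [/\ forall p, 0 <= pi p, finite_set [set p | pi p != 0],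
      forall x, \sum_(y \in [set: V]) pi (x, y) = f0 x
    & forall y, \sum_(x \in [set: V]) pi (x, y) = f1 y].

Definition cost (pi : V * V -> R) : R :=
  \sum_(p \in [set: V * V]) (dist p.1 p.2)%:R * pi p.

Definition optimal_coupling (f0 f1 : V -> R) (pi : V * V -> R) : Prop :=
  is_coupling f0 f1 pi /\
  forall pi', is_coupling f0 f1 pi' -> cost pi <= cost pi'.

Definition W1 (f0 f1 : V -> R) : R :=
  inf [set c | exists pi, is_coupling f0 f1 pi /\ c = cost pi].

Definition Cset (f0 f1 : V -> R) : set (V * V) :=
  [set p | exists pi, optimal_coupling f0 f1 pi /\ 0 < pi p].

Section Orientation.
Variables f0 f1 : V -> R.

Definition oriented (x y : V) : Prop :=
  adj x y /\
  exists gam : seq V,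
    [/\ is_geodesic gam, Cset f0 f1 (head x gam, last x gam)
      & exists k : nat, [/\ (k.+1 < size gam)%N, nth x gam k = x
                           & nth x gam k.+1 = y]].

Definition orel : rel V := fun x y => `[< oriented x y >].

Definition opath (gam : seq V) : bool :=
  if gam is x :: s then path orel x s else false.

Definition ole (x y : V) : Prop := exists s : seq V, path orel x s /\ last x s = y.

Definition Fout (x : V) : set V := [set y | oriented x y].
Definition Ein (x : V) : set V := [set y | oriented y x].
Definition Aset : set V := [set x | Ein x = set0].
Definition Bset : set V := [set x | Fout x = set0].

Definition extremal (gam : seq V) : Prop :=
  match gam with
  | x :: s => [/\ path orel x s, Aset x & Bset (last x s)]
  | [::] => False
  end.

Definition nabla_g (g : V -> V -> R) (x1 : V) : R :=
  \sum_(x2 \in Fout x1) g x1 x2 - \sum_(x0 \in Ein x1) g x0 x1.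

Definition nabla_h (h : V -> V -> V -> R) (x1 x2 : V) : R :=
  \sum_(x3 \in Fout x2) h x1 x2 x3 - \sum_(x0 \in Ein x1) h x0 x1 x2.

Definition Cpath (ft : V -> R) (gt : V -> V -> R) (gam : seq V) : R :=
  match gam with
  | [::] => 0
  | [:: x] => ft x
  | [:: x; y] => gt x y
  | x :: s => (\prod_(i < size s) gt (nth x gam i) (nth x gam i.+1)) /
              (\prod_(1 <= j < size s) ft (nth x gam j))
  end.

(* m(z_1,...,z_p) (evaluated with the time-0 slices ft = f_0, gt = g_0) *)
Definition mfun (ft : V -> R) (gt : V -> V -> R) (zs : seq V) : R :=
  \sum_(gam \in [set gam : seq V | extremal gam /\
         exists ks : seq nat, sorted leq ks /\
           [seq onth gam k | k <- ks] = [seq Some z | z <- zs]])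
    Cpath ft gt gam.

End Orientation.

Definition W1plus_geodesic (f : R -> V -> R) (g : R -> V -> V -> R)
    (h : R -> V -> V -> V -> R) : Prop :=
  [/\ forall t : R, 0 <= t <= 1 -> is_fdist (f t),
      forall s t : R, 0 <= s <= 1 -> 0 <= t <= 1 ->
        W1 (f s) (f t) = `|t - s| * W1 (f 0) (f 1) &
   [/\ forall (t : R) x, 0 <= t <= 1 ->
        is_derive t (1 : R) (fun u : R => f u x) (- nabla_g (f 0) (f 1) (g t) x),
      forall (t : R) x y, 0 <= t <= 1 -> oriented (f 0) (f 1) x y ->
        is_derive t (1 : R) (fun u : R => g u x y) (- nabla_h (f 0) (f 1) (h t) x y),
      forall (t : R) x y, 0 <= t <= 1 -> oriented (f 0) (f 1) x y -> 0 < g t x y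
    & forall (t : R) x0 x1 x2, 0 <= t <= 1 ->
        oriented (f 0) (f 1) x0 x1 -> oriented (f 0) (f 1) x1 x2 ->
        f t x1 * h t x0 x1 x2 = g t x0 x1 * g t x1 x2]].

End W1Geodesics.

(* An oriented cycle c_0 -> ... -> c_k = c_0 is impossible: each edge c_l -> c_(l+1)
   lies on a geodesic between a pair (a_l, b_l) charged by an optimal coupling, so
   by the triangle inequality sum_l d(a_(l+1), b_l) < sum_l d(a_l, b_l), and moving
   a little mass from the pairs (a_l, b_l) to the pairs (a_(l+1), b_l) would lower
   the transport cost.  Hence extremal paths are simple; as they stay in the finite
   union of balls spanned by the supports of f_0 and f_1, finitely many pass through
   each vertex.
   The weight of a path through v is (weight up to v) * (weight from v) / f_0(v),
   and whether v begins or ends an extremal path depends on v alone, so exchanging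
   the tails after v of two extremal paths through v is an involution that keeps
   them extremal and keeps the product of their weights.  Summing over pairs gives
   m(z, v, z') m(v) = m(z, v) m(v, z'); the formula follows by induction. *)

From HB Require Import structures.
From mathcomp Require Import all_boot all_order all_algebra.
From mathcomp Require Import boolp classical_sets functions cardinality fsbigop.
From mathcomp Require Import reals topology normedtype derive.
From mathcomp Require Import ring lra zify.
Import Order.TTheory GRing.Theory Num.Theory numFieldNormedType.Exports.
Local Open Scope classical_set_scope.
Local Open Scope ring_scope.
Set Implicit Arguments.
Unset Strict Implicit.
Unset Printing Implicit Defensive.

Section FinitelySupportedSums.
Variables (R : realType) (T : choiceType).
Implicit Types (F G : T -> R).

Definition finsupp F := finite_set [set x | F x != 0].

Lemma supportD F G :
  [set x | F x + G x != 0] `<=` [set x | F x != 0] `|` [set x | G x != 0].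
Proof.
move=> x /=; have [F0|] := eqVneq (F x) 0; last by left.
by rewrite F0 add0r; right.
Qed.

Lemma finsuppD F G : finsupp F -> finsupp G -> finsupp (fun x => F x + G x).
Proof.
by move=> fF fG; apply: sub_finite_set (@supportD F G) _; rewrite finite_setU.
Qed.

Lemma finsuppMl G F : finsupp F -> finsupp (fun x => G x * F x).
Proof.
by apply: sub_finite_set => x /=; apply: contraNneq => ->; rewrite mulr0.
Qed.

Lemma finsuppMr G F : finsupp F -> finsupp (fun x => F x * G x).
Proof.
by apply: sub_finite_set => x /=; apply: contraNneq => ->; rewrite mul0r.
Qed.

Lemma finsuppN F : finsupp F -> finsupp (fun x => - F x).
Proof. by move=> fF; apply: sub_finite_set fF => x /=; rewrite oppr_eq0. Qed.

Lemma finsuppB F G : finsupp F -> finsupp G -> finsupp (fun x => F x - G x).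
Proof. by move=> fF /finsuppN; exact: finsuppD. Qed.

Lemma finsupp_sum (I : Type) (r : seq I) (F : I -> T -> R) :
  (forall i, finsupp (F i)) -> finsupp (fun x => \sum_(i <- r) F i x).
Proof.
move=> fF; elim: r => [|i r IH].
  by apply: (sub_finite_set (B := set0)) => // x /=; rewrite big_nil eqxx.
by apply: sub_finite_set (finsuppD (fF i) IH) => x /=; rewrite big_cons.
Qed.

Lemma finsupp_indicator (q : T) : finsupp (fun x => (x == q)%:R).
Proof.
apply: (sub_finite_set (B := [set q])); last exact: finite_set1.
by move=> x /=; have [//|_] := eqVneq x q; rewrite mulr0n eqxx.
Qed.

Lemma fsumT_supp (S : set T) F : [set x | F x != 0] `<=` S ->
  \sum_(x \in [set: T]) F x = \sum_(x \in S) F x.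
Proof.
move=> FS; apply/esym/fsbig_widen => // x [_ Sx] /=.
by apply/eqP/negPn/negP => /FS.
Qed.

Lemma fsumTD F G : finsupp F -> finsupp G ->
  \sum_(x \in [set: T]) (F x + G x) =
  \sum_(x \in [set: T]) F x + \sum_(x \in [set: T]) G x.
Proof.
move=> fF fG; pose S := [set x | F x != 0] `|` [set x | G x != 0].
have fS : finite_set S by rewrite finite_setU.
rewrite !(@fsumT_supp S) ?fsbig_split //; last exact: supportD.
  by move=> x; right.
by move=> x; left.
Qed.

Lemma fsumTN F : \sum_(x \in [set: T]) - F x = - \sum_(x \in [set: T]) F x.
Proof. by rewrite -mulN1r mulr_fsumr; apply: eq_fsbigr => x _; rewrite mulN1r. Qed.

Lemma fsumTB F G : finsupp F -> finsupp G ->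
  \sum_(x \in [set: T]) (F x - G x) =
  \sum_(x \in [set: T]) F x - \sum_(x \in [set: T]) G x.
Proof. by move=> fF fG; rewrite fsumTD ?fsumTN //; exact: finsuppN. Qed.

Lemma fsumT_mid (F G : T -> R) : finsupp F -> finsupp G ->
  \sum_(x \in [set: T]) 2^-1 * (F x + G x) =
  2^-1 * (\sum_(x \in [set: T]) F x + \sum_(x \in [set: T]) G x).
Proof. by move=> fF fG; rewrite -mulr_fsumr fsumTD. Qed.

Lemma fsumT_sum (I : Type) (r : seq I) (F : I -> T -> R) :
  (forall i, finsupp (F i)) ->
  \sum_(x \in [set: T]) \sum_(i <- r) F i x =
  \sum_(i <- r) \sum_(x \in [set: T]) F i x.
Proof.
move=> fF; elim: r => [|i r IH].
  by rewrite big_nil; apply: fsbig1 => x _; rewrite big_nil.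
under eq_fsbigr do rewrite big_cons.
by rewrite fsumTD ?big_cons ?IH //; exact: finsupp_sum.
Qed.

Lemma fsumT_indicator (q : T) F :
  \sum_(x \in [set: T]) (x == q)%:R * F x = F q.
Proof.
rewrite (@fsumT_supp [set q]) ?fsbig_set1 ?eqxx ?mul1r // => x /=.
by have [//|_] := eqVneq x q; rewrite mulr0n mul0r eqxx.
Qed.

Lemma fsumT_ge_term F t : finsupp F -> (forall x, 0 <= F x) ->
  F t <= \sum_(x \in [set: T]) F x.
Proof.
move=> fF F_ge0; rewrite -subr_ge0 -{1}(fsumT_indicator t F) -fsumTB //.
  apply: fsumr_ge0 => x _; have [->|_] := eqVneq x t; first by rewrite mul1r subrr.
  by rewrite mul0r subr0.
exact/finsuppMl.
Qed.

End FinitelySupportedSums.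

Lemma finite_bounded_seqs (T : choiceType) (A : set T) n : finite_set A ->
  finite_set [set s : seq T | (size s <= n)%N /\ forall x, x \in s -> A x].
Proof.
move=> fA; elim: n => [|n IH].
  apply: (sub_finite_set (B := [set [::]])); last exact: finite_set1.
  by move=> s [size_s _]; case: s size_s.
apply: (sub_finite_set (B := [set [::]] `|` [set x :: s | x in A & s in
    [set s : seq T | (size s <= n)%N /\ forall x, x \in s -> A x]])).
  move=> [|x s] [/= size_s sA]; [by left | right].
  exists x; first by apply: sA; rewrite mem_head.
  by exists s => //; split => // y ys; apply: sA; rewrite inE ys orbT.
by rewrite finite_setU; split; [exact: finite_set1 | exact: finite_image2].
Qed.

Lemma exists_pos_lower_bound (R : realDomainType) (n : nat) (G : nat -> R) :
  (forall l, (l < n)%N -> 0 < G l) ->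
  exists2 mu, 0 < mu & forall l, (l < n)%N -> mu <= G l.
Proof.
elim: n => [|n IH] G_gt0; first by exists 1.
have [mu mu_gt0 le_mu] := IH (fun l lt_ln => G_gt0 l (ltnW lt_ln)).
exists (Num.min mu (G n)); first by rewrite lt_min mu_gt0 G_gt0.
move=> l; rewrite ltnS leq_eqVlt => /predU1P[->|lt_ln].
  by rewrite ge_min lexx orbT.
by rewrite ge_min le_mu.
Qed.

Section ProductSupports.
Variables (R : realType) (T1 T2 : choiceType).

Lemma finsupp_row (F : T1 * T2 -> R) x : finsupp F -> finsupp (fun y => F (x, y)).
Proof.
move=> fF; apply: (sub_finite_set (B := snd @` [set p | F p != 0])).
  by move=> y Fxy; exists (x, y).
exact: finite_image.
Qed.

Lemma finsupp_col (F : T1 * T2 -> R) y : finsupp F -> finsupp (fun x => F (x, y)).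
Proof.
move=> fF; apply: (sub_finite_set (B := fst @` [set p | F p != 0])).
  by move=> x Fxy; exists (x, y).
exact: finite_image.
Qed.

Lemma indicator_pair (x u : T1) (y v : T2) :
  (((x, y) == (u, v))%:R : R) = (x == u)%:R * (y == v)%:R.
Proof. by rewrite xpair_eqE -mulnb natrM. Qed.

Lemma fsumT_indicator_row x (u : T1) (v : T2) :
  \sum_(y \in [set: T2]) (((x, y) == (u, v))%:R : R) = (x == u)%:R.
Proof.
by under eq_fsbigr do rewrite indicator_pair mulrC; rewrite fsumT_indicator.
Qed.

Lemma fsumT_indicator_col y (u : T1) (v : T2) :
  \sum_(x \in [set: T1]) (((x, y) == (u, v))%:R : R) = (y == v)%:R.
Proof.
by under eq_fsbigr do rewrite indicator_pair; rewrite fsumT_indicator.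
Qed.

End ProductSupports.

Section CycleExchange.
Variables (R : realType) (V : choiceType) (k : nat) (a b : nat -> V).

Definition cycle_exchange (p : V * V) : R :=
  \sum_(l < k) ((p == (a l.+1, b l))%:R - (p == (a l, b l))%:R).

Lemma finsupp_cycle_exchange : finsupp cycle_exchange.
Proof. by apply: finsupp_sum => l; apply: finsuppB; exact: finsupp_indicator. Qed.

Lemma fsum_cycle_exchange (F : V * V -> R) :
  \sum_(p \in [set: V * V]) F p * cycle_exchange p =
  \sum_(l < k) (F (a l.+1, b l) - F (a l, b l)).
Proof.
under eq_fsbigr do rewrite mulr_sumr.
rewrite fsumT_sum => [|l]; last first.
  by apply: finsuppMl; apply: finsuppB; exact: finsupp_indicator.
apply: eq_bigr => l _; under eq_fsbigr do rewrite mulrBr ![F _ * _]mulrC.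
by rewrite fsumTB ?fsumT_indicator //; exact/finsuppMr/finsupp_indicator.
Qed.

Lemma cycle_exchange_row x : a k = a 0 ->
  \sum_(y \in [set: V]) cycle_exchange (x, y) = 0.
Proof.
move=> closed; rewrite /cycle_exchange fsumT_sum => [|l]; last first.
  by apply: finsuppB; exact: (finsupp_row x (finsupp_indicator _ _)).
transitivity (\sum_(l < k) ((x == a l.+1)%:R - (x == a l)%:R : R)).
  apply: eq_bigr => l _; rewrite fsumTB; try exact: (finsupp_row x (finsupp_indicator _ _)).
  by rewrite !fsumT_indicator_row.
rewrite -(big_mkord xpredT (fun l => (x == a l.+1)%:R - (x == a l)%:R)).
by rewrite telescope_sumr // closed subrr.
Qed.

Lemma cycle_exchange_col y : \sum_(x \in [set: V]) cycle_exchange (x, y) = 0.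
Proof.
rewrite /cycle_exchange fsumT_sum => [|l]; last first.
  by apply: finsuppB; exact: (finsupp_col y (finsupp_indicator _ _)).
apply: big1 => l _; rewrite fsumTB; try exact: (finsupp_col y (finsupp_indicator _ _)).
by rewrite !fsumT_indicator_col subrr.
Qed.

Lemma cycle_exchange_lbound p : - k%:R <= cycle_exchange p.
Proof.
have -> : - k%:R = \sum_(l < k) (-1 : R) by rewrite sumr_const card_ord mulNrn.
apply: ler_sum => l _; rewrite lerBrDl.
by case: (p == _); case: (p == _); rewrite /= ?mulr0n ?mulr1n; lra.
Qed.

Lemma cycle_exchange_ge0 p : (forall l, (l < k)%N -> p != (a l, b l)) ->
  0 <= cycle_exchange p.
Proof.
move=> p_out; apply: sumr_ge0 => l _.
by rewrite (negbTE (p_out l (ltn_ord l))) subr0 ler0n.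
Qed.

End CycleExchange.

Section OptimalCouplings.
Variables (R : realType) (V : choiceType) (adj : rel V) (f0 f1 : V -> R).
Local Notation coupling := (is_coupling f0 f1).
Local Notation optimal := (optimal_coupling adj f0 f1).

Lemma optimal_coupling_mid P Q : optimal P -> optimal Q ->
  optimal (fun p => 2^-1 * (P p + Q p)).
Proof.
move=> [[P_ge0 fP Prow Pcol] P_min] [[Q_ge0 fQ Qrow Qcol] Q_min].
have mid_eq (c : R) : 2^-1 * (c + c) = c by lra.
have cost_mid : cost adj (fun p => 2^-1 * (P p + Q p)) = 2^-1 * (cost adj P + cost adj Q).
  rewrite /cost -fsumT_mid; try exact: finsuppMl.
  apply: eq_fsbigr => p _; ring.
split.
  split.
  - by move=> p; rewrite mulr_ge0 ?invr_ge0 ?ler0n ?addr_ge0.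
  - exact/finsuppMl/finsuppD.
  - by move=> x; rewrite fsumT_mid ?Prow ?Qrow ?mid_eq //; exact: finsupp_row.
  - by move=> y; rewrite fsumT_mid ?Pcol ?Qcol ?mid_eq //; exact: finsupp_col.
move=> pi' pi'_cpl; rewrite cost_mid -[cost adj pi']mid_eq.
by rewrite ler_wpM2l ?invr_ge0 ?ler0n // lerD ?P_min ?Q_min.
Qed.

Lemma Cset_common_optimal_coupling k (a b : nat -> V) :
  (forall l, (l < k.+1)%N -> Cset adj f0 f1 (a l, b l)) ->
  exists pi, optimal pi /\ forall l, (l < k.+1)%N -> 0 < pi (a l, b l).
Proof.
elim: k => [|k IH] inC.
  have [pi [pi_opt pi_pos]] := inC 0%N (ltnSn 0).
  by exists pi; split=> // l; rewrite ltnS leqn0 => /eqP->.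
have [P [P_opt P_pos]] := IH (fun l lt_lk => inC l (ltnW lt_lk)).
have [Q [Q_opt Q_pos]] := inC k.+1 (ltnSn _).
have [[P_ge0 _ _ _] _] := P_opt; have [[Q_ge0 _ _ _] _] := Q_opt.
exists (fun p => 2^-1 * (P p + Q p)); split; first exact: optimal_coupling_mid.
move=> l; rewrite ltnS leq_eqVlt => /predU1P[->|lt_lk].
  by rewrite mulr_gt0 ?invr_gt0 ?ltr0n ?ltr_wpDl.
by rewrite mulr_gt0 ?invr_gt0 ?ltr0n ?ltr_wpDr ?P_pos.
Qed.

Lemma coupling_cycle_exchange pi (eps : R) k (a b : nat -> V) :
  coupling pi -> a k = a 0 ->
  (forall p, 0 <= pi p + eps * cycle_exchange R k a b p) ->
  coupling (fun p => pi p + eps * cycle_exchange R k a b p).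
Proof.
move=> [_ fpi pi_row pi_col] closed ge0.
have fex : finsupp (cycle_exchange R k a b) by exact: finsupp_cycle_exchange.
split => //.
- exact/finsuppD/finsuppMl.
- move=> x; rewrite fsumTD -?mulr_fsumr ?cycle_exchange_row ?mulr0 ?addr0 //.
    exact: finsupp_row.
  exact/finsuppMl/finsupp_row.
- move=> y; rewrite fsumTD -?mulr_fsumr ?cycle_exchange_col ?mulr0 ?addr0 //.
    exact: finsupp_col.
  exact/finsuppMl/finsupp_col.
Qed.

Lemma cost_cycle_exchange pi (eps : R) k (a b : nat -> V) : finsupp pi ->
  cost adj (fun p => pi p + eps * cycle_exchange R k a b p) =
  cost adj pi + eps * \sum_(l < k)
    ((dist adj (a l.+1) (b l))%:R - (dist adj (a l) (b l))%:R).
Proof.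
move=> fpi.
have fex : finsupp (cycle_exchange R k a b) by exact: finsupp_cycle_exchange.
rewrite /cost; under eq_fsbigr do rewrite mulrDr mulrCA.
rewrite fsumTD; [|exact: finsuppMl|exact/finsuppMl/finsuppMl].
by rewrite -mulr_fsumr fsum_cycle_exchange.
Qed.

Lemma optimal_coupling_cyclically_monotone pi k (a b : nat -> V) :
  optimal pi -> (forall l, (l < k)%N -> 0 < pi (a l, b l)) -> a k = a 0 ->
  (\sum_(l < k) dist adj (a l) (b l) <= \sum_(l < k) dist adj (a l.+1) (b l))%N.
Proof.
move=> [pi_cpl pi_min] pi_pos closed; have [pi_ge0 fpi _ _] := pi_cpl.
case: (posnP k) => [->|k_gt0]; first by rewrite !big_ord0.
have [mu mu_gt0 le_mu] := exists_pos_lower_bound pi_pos.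
pose eps := mu / k%:R.
have eps_gt0 : 0 < eps by rewrite divr_gt0 ?ltr0n.
have ge0 p : 0 <= pi p + eps * cycle_exchange R k a b p.
  have [[l lt_lk ->]|p_out] := pselect (exists2 l, (l < k)%N & p = (a l, b l)).
    have : - mu <= eps * cycle_exchange R k a b (a l, b l).
      have <- : eps * k%:R = mu by rewrite mulfVK // pnatr_eq0 -lt0n.
      by rewrite -mulrN ler_pM2l ?cycle_exchange_lbound.
    by have := le_mu l lt_lk; lra.
  rewrite addr_ge0 // mulr_ge0 ?(ltW eps_gt0) // cycle_exchange_ge0 // => l lt_lk.
  by apply/eqP => p_eq; apply: p_out; exists l.
have := pi_min _ (coupling_cycle_exchange pi_cpl closed ge0).
by rewrite cost_cycle_exchange // lerDl pmulr_rge0 // sumrB -!natr_sum subr_ge0 ler_nat.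
Qed.

Lemma Cset_cyclically_monotone k (a b : nat -> V) :
  (forall l, (l < k)%N -> Cset adj f0 f1 (a l, b l)) -> a k = a 0 ->
  (\sum_(l < k) dist adj (a l) (b l) <= \sum_(l < k) dist adj (a l.+1) (b l))%N.
Proof.
case: k => [|k] inC closed; first by rewrite !big_ord0.
have [pi [pi_opt pi_pos]] := Cset_common_optimal_coupling inC.
exact: (optimal_coupling_cyclically_monotone pi_opt pi_pos closed).
Qed.

End OptimalCouplings.

Section GraphDistance.
Variables (V : choiceType) (adj : rel V).
Hypothesis conn : connected_graph adj.

Lemma walk_len_refl x : walk_len adj x x 0.
Proof. by exists [::]. Qed.

Lemma walk_len_cons x y z n :
  adj x y -> walk_len adj y z n -> walk_len adj x z n.+1.
Proof. by move=> xy [s [<- ys <-]]; exists (y :: s); rewrite /= xy. Qed.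

Lemma walk_len_cat x y z n k :
  walk_len adj x y n -> walk_len adj y z k -> walk_len adj x z (n + k).
Proof.
move=> [s [<- xs <-]] [t [<- yt <-]]; exists (s ++ t).
by rewrite size_cat cat_path xs yt last_cat.
Qed.

Lemma path_walk_len_nth x s k : path adj x s -> (k <= size s)%N ->
  walk_len adj x (nth x (x :: s) k) k /\
  walk_len adj (nth x (x :: s) k) (last x s) (size s - k).
Proof.
elim: s x k => [|y s IH] x [|k] //= xys le_ks.
- by split; [exact: walk_len_refl | exists [::]].
- by split; [exact: walk_len_refl | exists (y :: s)].
case/andP: xys => xy ys; have [w1 w2] := IH y k ys le_ks.
rewrite (@set_nth_default _ _ y x) ?ltnS //.
by split; [exact: walk_len_cons w1 | rewrite subSS].
Qed.

Lemma dist_min x y n : walk_len adj x y n -> (dist adj x y <= n)%N.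
Proof.
move=> w; rewrite /dist; case: pselect => [ex|/(_ (ex_intro _ n _))[]].
  by case: ex_minnP => d _; apply; apply/asboolP.
exact/asboolP.
Qed.

Lemma dist_walk_len x y : walk_len adj x y (dist adj x y).
Proof.
rewrite /dist; case: pselect => [ex|no_walk]; first by case: ex_minnP => d /asboolP.
by have [n w] := conn x y; case: no_walk; exists n; apply/asboolP.
Qed.

Lemma dist_triangle x y z : (dist adj x z <= dist adj x y + dist adj y z)%N.
Proof. exact/dist_min/walk_len_cat/dist_walk_len/dist_walk_len. Qed.

Lemma dist_adj x y : adj x y -> (dist adj x y <= 1)%N.
Proof. by move=> xy; apply/dist_min/(walk_len_cons xy)/walk_len_refl. Qed.

Definition ball (x : V) (n : nat) : set V := [set y | (dist adj x y <= n)%N].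

Hypothesis lfin : locally_finite adj.

Lemma ball_finite x n : finite_set (ball x n).
Proof.
elim: n => [|n IH].
  apply: (sub_finite_set (B := [set x])); last exact: finite_set1.
  move=> y; rewrite /ball /= leqn0 => /eqP d0; have := dist_walk_len x y.
  by rewrite d0 => -[s [size0 _ <-]]; case: s size0.
apply: (sub_finite_set (B := ball x n `|` \bigcup_(z in ball x n) [set y | adj z y])).
  move=> y; rewrite /ball /= leq_eqVlt ltnS => /predU1P[d_eq|]; last by left.
  right; have := dist_walk_len x y; rewrite d_eq => -[s [size_s xs <-]].
  case/lastP: s size_s xs => [//|s z]; rewrite size_rcons rcons_path last_rcons.
  case=> size_s /andP[xs sz]; exists (last x s) => //=.
  by rewrite -size_s; apply: dist_min; exists s.
by rewrite finite_setU; split => //; apply: bigcup_finite => // z _; exact: lfin.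
Qed.

End GraphDistance.

Lemma sum_cyclic_shift (G : nat -> nat) k : G k = G 0 ->
  (\sum_(l < k) G l.+1 = \sum_(l < k) G l)%N.
Proof.
case: k => [|k] closed; first by rewrite !big_ord0.
by rewrite big_ord_recr big_ord_recl /= closed addnC.
Qed.

Section Orientation.
Variables (R : realType) (V : choiceType) (adj : rel V) (f0 f1 : V -> R).
Local Notation oriented := (oriented adj f0 f1).
Local Notation dist := (dist adj).

Lemma oriented_Cset_dist x y : oriented x y ->
  exists a b, Cset adj f0 f1 (a, b) /\ ((dist a x + dist y b).+1 <= dist a b)%N.
Proof.
move=> [_ [gam [geo inC [k [lt_ks gk gk1]]]]].
case: gam geo inC lt_ks gk gk1 => [//|a s] [pas size_s] inC lt_ks gk gk1.
exists a, (last a s); split => //.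
rewrite (@set_nth_default _ _ a x) ?(ltnW lt_ks) // in gk.
rewrite (@set_nth_default _ _ a x) // in gk1.
have [w1 _] := path_walk_len_nth pas (ltnW lt_ks).
have [_ w2] := path_walk_len_nth pas (lt_ks : (k.+1 <= size s)%N).
rewrite gk in w1; rewrite gk1 in w2.
by have := dist_min w1; have := dist_min w2; move: lt_ks; rewrite /= -size_s; lia.
Qed.

Lemma Cset_marginals_gt0 a b : Cset adj f0 f1 (a, b) -> 0 < f0 a /\ 0 < f1 b.
Proof.
move=> [pi [[[pi_ge0 fpi pi_row pi_col] _] pi_pos]]; split.
  by rewrite -pi_row (lt_le_trans pi_pos) // (fsumT_ge_term (F := fun y => pi (a, y)))
    //; exact: finsupp_row.
by rewrite -pi_col (lt_le_trans pi_pos) // (fsumT_ge_term (F := fun x => pi (x, b)))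
  //; exact: finsupp_col.
Qed.

Hypothesis conn : connected_graph adj.

Lemma oriented_acyclic k (c : nat -> V) : (0 < k)%N -> c k = c 0 ->
  (forall l, (l < k)%N -> oriented (c l) (c l.+1)) -> False.
Proof.
move=> k_gt0 closed c_or.
have ab_ex l : exists p : V * V, (l < k)%N ->
    Cset adj f0 f1 p /\ ((dist p.1 (c l) + dist (c l.+1) p.2).+1 <= dist p.1 p.2)%N.
  case: (ltnP l k) => [lt_lk|le_kl]; last by exists (c 0, c 0) => lt_lk; lia.
  by have [a [b]] := oriented_Cset_dist (c_or l lt_lk); exists (a, b).
have [ab ab_spec] := choice ab_ex.
pose a l := (ab (l %% k)%N).1; pose b l := (ab l).2.
have aE l : (l < k)%N -> a l = (ab l).1 by move=> lt_lk; rewrite /a modn_small.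
have a_closed : a k = a 0 by rewrite /a modnn mod0n.
have inC l : (l < k)%N -> Cset adj f0 f1 (a l, b l).
  by move=> lt_lk; rewrite aE // /b -surjective_pairing; case: (ab_spec l lt_lk).
have := Cset_cyclically_monotone inC a_closed.
rewrite leqNgt => /negP; apply.
apply: (@leq_ltn_trans (\sum_(l < k) (dist (a l.+1) (c l.+1) + dist (c l.+1) (b l)))).
  by apply: leq_sum => l _; exact: dist_triangle.
rewrite big_split /= (@sum_cyclic_shift (fun l => dist (a l) (c l))) /=; last first.
  by rewrite a_closed closed.
have step l : (l < k)%N ->
    (dist (a l) (c l) + dist (c l.+1) (b l) + 1 <= dist (a l) (b l))%N.
  by move=> lt_lk; rewrite aE // addn1; case: (ab_spec l lt_lk).
have : (\sum_(l < k) (dist (a l) (c l) + dist (c l.+1) (b l) + 1) <=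
    \sum_(l < k) dist (a l) (b l))%N by apply: leq_sum => l _; exact: step.
by rewrite !big_split /= sum1_card card_ord; lia.
Qed.

Lemma oriented_path_uniq x s : path (orel adj f0 f1) x s -> uniq (x :: s).
Proof.
move=> xs; apply/(uniqPn x) => -[i [j [lt_ij lt_js nth_ij]]].
pose c l := nth x (x :: s) (i + l).
apply: (@oriented_acyclic (j - i) c); first by rewrite subn_gt0.
  by rewrite /c subnKC ?addn0 ?(ltnW lt_ij).
move=> l lt_l; have lt_s : (i + l < size s)%N.
  by move: lt_js; rewrite /= ltnS; apply: leq_trans; rewrite -ltn_subRL.
by have /asboolP := pathP x xs (i + l) lt_s; rewrite /c addnS.
Qed.

Hypotheses (lfin : locally_finite adj) (fd0 : is_fdist f0) (fd1 : is_fdist f1).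

Definition transport_region : set V :=
  \bigcup_(p in [set p | f0 p.1 != 0 /\ f1 p.2 != 0]) ball adj p.1 (dist p.1 p.2).

Lemma transport_region_finite : finite_set transport_region.
Proof.
apply: bigcup_finite => [|p _]; last exact: ball_finite.
apply: (sub_finite_set (B := [set x | f0 x != 0] `*` [set y | f1 y != 0])).
  by move=> p [].
by apply: finite_setX; [case: fd0 | case: fd1].
Qed.

Lemma oriented_transport_region x y : oriented x y ->
  transport_region x /\ transport_region y.
Proof.
move=> xy; have [a [b [inC dist_ab]]] := oriented_Cset_dist xy.
have [f0a f1b] := Cset_marginals_gt0 inC.
have supp_ab : [set p | f0 p.1 != 0 /\ f1 p.2 != 0] (a, b) by rewrite /= !gt_eqF.
split; exists (a, b) => //; rewrite /ball /=; first by lia.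
have := dist_triangle conn a x y; have := dist_adj xy.1; lia.
Qed.

Lemma oriented_path_region x s : path (orel adj f0 f1) x s -> s != [::] ->
  forall z, z \in x :: s -> transport_region z.
Proof.
elim: s x => [//|y s IH] x /= /andP[/asboolP xy ys] _ z.
have [x_in y_in] := oriented_transport_region xy.
rewrite inE => /predU1P[-> //|]; case: s IH ys => [|w s] IH ys.
  by rewrite inE => /eqP->.
exact: IH.
Qed.

Lemma extremal_paths_finite v :
  finite_set [set g | extremal adj f0 f1 g /\ v \in g].
Proof.
pose n := size (finmap.enum_fset (fset_set transport_region)).
apply: (sub_finite_set (B := [set [:: v]] `|`
    [set g | (size g <= n)%N /\ forall z, z \in g -> transport_region z])).
  move=> [|x [|y s]] [] // [xs _ _] v_in; first by left; move: v_in; rewrite inE => /eqP->.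
  have in_region := oriented_path_region xs isT; right; split => //.
  apply: uniq_leq_size; first exact: oriented_path_uniq xs.
  move=> z /in_region; rewrite (in_fset_set transport_region_finite).
  by rewrite inE.
rewrite finite_setU; split; first exact: finite_set1.
exact/finite_bounded_seqs/transport_region_finite.
Qed.

End Orientation.

Section Visits.
Variable T : eqType.
Implicit Types (zs s p q : seq T) (v x z : T).

(* Consecutive equal entries of [zs] may be matched at the same position of [s],
   as the indices in [mfun] are only weakly increasing. *)
Fixpoint visits zs s : bool :=
  match zs with
  | [::] => true
  | z :: zs' =>
    (fix visits_z s := if s is x :: s' then (x == z) && visits zs' s || visits_z s'
                       else false) s
  end.

Lemma visits_cons z zs x s :
  visits (z :: zs) (x :: s) = (x == z) && visits zs (x :: s) || visits (z :: zs) s.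
Proof. by []. Qed.

Lemma visits_mem zs s z : visits zs s -> z \in zs -> z \in s.
Proof.
elim: zs s => [//|z0 zs IH] s; elim: s => [//|x s IHs].
rewrite visits_cons => /orP[/andP[/eqP-> vis]|vis].
  by rewrite inE => /predU1P[->|/IH]; [rewrite mem_head | exact].
by move/(IHs vis); rewrite inE orbC => ->.
Qed.

Lemma visits1 v s : visits [:: v] s = (v \in s).
Proof.
by elim: s => [//|x s IH]; rewrite visits_cons IH inE /= andbT eq_sym.
Qed.

Lemma visitsP zs s :
  (exists ks : seq nat, sorted leq ks /\
     [seq onth s k | k <- ks] = [seq Some z | z <- zs]) <-> visits zs s.
Proof.
elim: zs s => [|z zs IH] s; first by split=> // _; exists [::].
elim: s => [|x s IHs]; first by split=> // -[[|k ks] [_ /=]] //; rewrite onth0n.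
rewrite visits_cons; split.
  move=> [[|k ks] [sorted_ks]] //= [onth_k onth_ks].
  case: k sorted_ks onth_k => [|k] sorted_ks onth_k.
    apply/orP; left; move: onth_k => [<-]; rewrite eqxx /=; apply/IH.
    by exists ks; move: sorted_ks; rewrite /= (path_sortedE leq_trans) => /andP[].
  apply/orP; right; apply/IHs.
  move: sorted_ks; rewrite /= (path_sortedE leq_trans) => /andP[ge_ks sorted_ks].
  exists (k :: map predn ks); split.
    rewrite /= (path_sortedE leq_trans) sorted_map; apply/andP; split.
      by apply/allP => _ /mapP[[|j] /(allP ge_ks) le_kj ->].
    by apply: sub_sorted sorted_ks => [[|i] [|j]].
  rewrite /= -onth_k -onth_ks -map_comp; congr (_ :: _).
  by apply/eq_in_map => -[|j] /(allP ge_ks).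
move=> /orP[/andP[/eqP-> /IH[ks [sorted_ks onth_ks]]]|/IHs[ks [sorted_ks onth_ks]]].
  exists (0%N :: ks); split; last by rewrite /= onth_ks.
  by rewrite /= (path_sortedE leq_trans) sorted_ks andbT; apply/allP.
by exists (map S ks); rewrite sorted_map -map_comp.
Qed.

Lemma visits_cat_mid zl zr v p q : v \notin p -> v \notin q ->
  visits (zl ++ v :: zr) (p ++ v :: q) =
  visits (zl ++ [:: v]) (p ++ [:: v]) && visits (v :: zr) (v :: q).
Proof.
move=> vNp vNq.
have visits_q zs : v \in zs -> visits zs q = false.
  by move=> v_zs; apply/negbTE/negP => /visits_mem /(_ v_zs); apply/negP.
elim: p vNp zl => [|x p IHp] vNp zl.
  elim: zl => [|z zl IHz]; first by rewrite !cat0s /= eqxx.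
  rewrite !cat0s !cat_cons visits_cons IHz [visits (z :: _) [:: v]]visits_cons.
  rewrite visits_q; last by rewrite inE mem_cat inE eqxx !orbT.
  by rewrite cat0s /= !orbF andbA.
move: vNp; rewrite inE negb_or eq_sym => /andP[xNv vNp].
elim: zl => [|z zl IHz].
  rewrite !cat0s !cat_cons visits_cons (negbTE xNv) andFb orFb.
  rewrite [visits [:: v] _]visits_cons (negbTE xNv) andFb orFb.
  by have := IHp vNp [::]; rewrite !cat0s.
rewrite !cat_cons visits_cons -cat_cons IHz -cat_cons (IHp vNp (z :: zl)).
rewrite [visits (z :: _) (x :: _)]visits_cons !cat_cons.
by case: (x == z); case: (visits (v :: zr) (v :: q)); rewrite ?andbT ?andbF ?orbF.
Qed.

Lemma visits_prefix zl v p q : v \notin p -> v \notin q ->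
  visits (zl ++ [:: v]) (p ++ v :: q) = visits (zl ++ [:: v]) (p ++ [:: v]).
Proof. by move=> vNp vNq; rewrite visits_cat_mid // visits1 mem_head andbT. Qed.

Lemma visits_suffix zr v p q : v \notin p -> v \notin q ->
  visits (v :: zr) (p ++ v :: q) = visits (v :: zr) (v :: q).
Proof.
by move=> vNp vNq; have := visits_cat_mid [::] zr vNp vNq; rewrite visits1 mem_cat mem_head orbT.
Qed.

Definition tail_swap v (pr : seq T * seq T) : seq T * seq T :=
  (take (index v pr.1) pr.1 ++ drop (index v pr.2) pr.2,
   take (index v pr.2) pr.2 ++ drop (index v pr.1) pr.1).

Lemma tail_swap_cat v p q p' q' : v \notin p -> v \notin p' ->
  tail_swap v (p ++ v :: q, p' ++ v :: q') = (p ++ v :: q', p' ++ v :: q).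
Proof.
move=> vNp vNp'.
by rewrite /tail_swap /= !index_cat (negbTE vNp) (negbTE vNp') /= eqxx !addn0
  !take_size_cat // !drop_size_cat.
Qed.

End Visits.

Lemma big_seq_invol (R : Type) (idx : R) (op : Monoid.com_law idx) (T : eqType)
    (r : seq T) (sigma : T -> T) (F : T -> R) :
  uniq r -> {in r, forall x, sigma x \in r} -> {in r, involutive sigma} ->
  \big[op/idx]_(x <- r) F x = \big[op/idx]_(x <- r) F (sigma x).
Proof.
move=> r_uniq sigma_r sigmaK; rewrite -(big_map sigma predT F).
apply: perm_big; apply: uniq_perm => //.
  rewrite map_inj_in_uniq // => x y x_r y_r eq_sigma.
  by rewrite -(sigmaK x x_r) eq_sigma sigmaK.
move=> x; apply/idP/mapP => [x_r|[y y_r ->]]; last exact: sigma_r.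
by exists (sigma x); [exact: sigma_r | rewrite sigmaK].
Qed.

Section PathWeights.
Variables (R : realType) (V : choiceType) (fw : V -> R) (gw : V -> V -> R).

Fixpoint edge_weight x s : R := if s is y :: s' then gw x y * edge_weight y s' else 1.

Fixpoint inner_weight x s : R :=
  match s with
  | y :: (_ :: _) as s' => fw y * inner_weight y s'
  | _ => 1
  end.

Lemma inner_weight_cons x y s : s != [::] -> inner_weight x (y :: s) = fw y * inner_weight y s.
Proof. by case: s. Qed.

Lemma edge_weightE x s :
  \prod_(i < size s) gw (nth x (x :: s) i) (nth x (x :: s) i.+1) = edge_weight x s.
Proof.
elim: s x => [|y s IH] x; first by rewrite big_ord0.
rewrite big_ord_recl /= -(IH y); congr (_ * _); apply: eq_bigr => i _.
have lt_is := ltn_ord i.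
by rewrite /= (@set_nth_default _ (y :: s) y x) ?(@set_nth_default _ s y x) // ltnW.
Qed.

Lemma inner_weightE x s :
  \prod_(1 <= j < size s) fw (nth x (x :: s) j) = inner_weight x s.
Proof.
elim: s x => [|y [|z s] IH] x; [by rewrite big_geq | by rewrite big_geq |].
rewrite big_nat_recl // inner_weight_cons // -(IH y); congr (_ * _).
apply: eq_big_nat => i /andP[_ lt_i].
by rewrite /= (@set_nth_default _ _ y x) //= ltnW.
Qed.

Lemma CpathE x s : s != [::] -> Cpath fw gw (x :: s) = edge_weight x s / inner_weight x s.
Proof.
case: s => [//|y [|z s]] _; first by rewrite /= mulr1 invr1 mulr1.
by rewrite -(edge_weightE x) -(inner_weightE x).
Qed.

Lemma edge_weight_cat x p v q :
  edge_weight x (p ++ v :: q) = edge_weight x (p ++ [:: v]) * edge_weight v q.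
Proof. by elim: p x => [|y p IH] x /=; rewrite ?mulr1 // IH mulrA. Qed.

Lemma inner_weight_cat x p v y q :
  inner_weight x (p ++ v :: y :: q) =
  inner_weight x (p ++ [:: v]) * fw v * inner_weight v (y :: q).
Proof.
elim: p x => [|z p IH] x.
  by rewrite !cat0s inner_weight_cons // [inner_weight x [:: v]]/= mul1r.
have p_cat_nil w r : p ++ w :: r != [::] by case: p {IH}.
rewrite !cat_cons !(@inner_weight_cons x z) ?p_cat_nil //.
by rewrite IH !mulrA.
Qed.

Lemma Cpath_cat_mid x p v y q :
  Cpath fw gw (x :: p ++ v :: y :: q) =
  edge_weight x (p ++ [:: v]) * edge_weight v (y :: q) /
    (inner_weight x (p ++ [:: v]) * fw v * inner_weight v (y :: q)).
Proof. by rewrite CpathE; [rewrite edge_weight_cat inner_weight_cat | case: p]. Qed.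

Lemma Cpath_swap_tails x p y q x' p' y' q' v :
  Cpath fw gw (x :: p ++ v :: y :: q) * Cpath fw gw (x' :: p' ++ v :: y' :: q') =
  Cpath fw gw (x :: p ++ v :: y' :: q') * Cpath fw gw (x' :: p' ++ v :: y :: q).
Proof. by rewrite !Cpath_cat_mid !invfM; ring. Qed.

Lemma Cpath_ge0 (e : rel V) x s : (forall y, 0 <= fw y) ->
  (forall y z, e y z -> 0 < gw y z) -> path e x s -> 0 <= Cpath fw gw (x :: s).
Proof.
move=> fw_ge0 gw_gt0; case: s => [|y s] xs; first exact: fw_ge0.
have inner_ge0 z t : 0 <= inner_weight z t.
  elim: t z => [|w [|u t] IH] z //=; rewrite mulr_ge0 //; exact: IH.
have edge_ge0 z t : path e z t -> 0 <= edge_weight z t.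
  elim: t z => [|w t IH] z //= /andP[zw wt]; rewrite mulr_ge0 ?IH ?ltW ?gw_gt0 //.
by rewrite CpathE // divr_ge0 ?inner_ge0 ?edge_ge0.
Qed.

End PathWeights.

Section ExtremalPaths.
Variables (R : realType) (V : choiceType) (adj : rel V) (f0 f1 : V -> R).
Local Notation ext := (extremal adj f0 f1).
Local Notation orl := (orel adj f0 f1).
Implicit Types (p q : seq V) (v : V).

Lemma extremal_cat p v q : ext (p ++ v :: q) <->
  [/\ sorted orl (rcons p v), path orl v q,
      Aset adj f0 f1 (head v p) & Bset adj f0 f1 (last v q)].
Proof.
case: p => [|x p] /=; first by split => -[].
rewrite cat_path rcons_path /= last_cat /=.
split => [[/and3P[xp pv vq] src snk] | [/andP[-> ->] vq src snk]].
  by split => //; rewrite xp pv.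
by split => //; rewrite vq.
Qed.

Lemma extremal_prefix_nilP p v q : ext (p ++ v :: q) -> p = [::] <-> Aset adj f0 f1 v.
Proof.
move=> /extremal_cat[p_or _ src _]; split=> [p_nil|v_src]; first by rewrite p_nil in src.
case: p p_or {src} => // x p; rewrite /= rcons_path => /andP[_ /asboolP last_v].
by have : Ein adj f0 f1 v (last x p) by []; rewrite v_src.
Qed.

Lemma extremal_suffix_nilP p v q : ext (p ++ v :: q) -> q = [::] <-> Bset adj f0 f1 v.
Proof.
move=> /extremal_cat[_ q_or _ snk]; split=> [q_nil|v_snk]; first by rewrite q_nil in snk.
case: q q_or {snk} => // y q /= /andP[/asboolP v_y _].
by have : Fout adj f0 f1 v y by []; rewrite v_snk.
Qed.

Lemma extremal_swap_tails p v q p' q' :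
  ext (p ++ v :: q) -> ext (p' ++ v :: q') -> ext (p ++ v :: q').
Proof.
move=> /extremal_cat[p_or _ src _] /extremal_cat[_ q'_or _ snk].
exact/extremal_cat.
Qed.

Lemma Cpath_extremal_swap_tails (fw : V -> R) (gw : V -> V -> R) p v q p' q' :
  ext (p ++ v :: q) -> ext (p' ++ v :: q') ->
  Cpath fw gw (p ++ v :: q') * Cpath fw gw (p' ++ v :: q) =
  Cpath fw gw (p ++ v :: q) * Cpath fw gw (p' ++ v :: q').
Proof.
move=> ext1 ext2.
have pP := extremal_prefix_nilP ext1; have p'P := extremal_prefix_nilP ext2.
have qP := extremal_suffix_nilP ext1; have q'P := extremal_suffix_nilP ext2.
clear ext1 ext2.
case: p pP => [|x p] pP; case: p' p'P => [|x' p'] p'P;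
  try by [rewrite mulrC | have := pP.2 (p'P.1 erefl) | have := p'P.2 (pP.1 erefl)].
case: q qP => [|y q] qP; case: q' q'P => [|y' q'] q'P;
  try by [rewrite mulrC | have := qP.2 (q'P.1 erefl) | have := q'P.2 (qP.1 erefl)].
by rewrite !cat_cons Cpath_swap_tails.
Qed.

End ExtremalPaths.

Section ProductFormula.
Variables (R : realType) (V : choiceType) (adj : rel V) (f0 f1 fw : V -> R).
Variable gw : V -> V -> R.
Local Notation ext := (extremal adj f0 f1).
Local Notation C := (Cpath fw gw).
Local Notation m := (mfun adj f0 f1 fw gw).
Hypothesis extremal_uniq : forall g, ext g -> uniq g.
Hypothesis extremal_through_finite : forall v, finite_set [set g | ext g /\ v \in g].
Hypothesis Cpath_extremal_ge0 : forall g, ext g -> 0 <= C g.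

Definition extremal_through v : seq (seq V) :=
  finmap.enum_fset (fset_set [set g | ext g /\ v \in g]).

Lemma mem_extremal_through v g : g \in extremal_through v <-> ext g /\ v \in g.
Proof. by rewrite /extremal_through (in_fset_set (extremal_through_finite v)) inE. Qed.

Lemma mfunE v zs : v \in zs ->
  m zs = \sum_(g <- extremal_through v) (visits zs g)%:R * C g.
Proof.
move=> v_zs; rewrite /mfun.
under eq_fsbigr => g /[!inE] -[_ /visitsP vis] do rewrite -[C g]mul1r -[1]/(true%:R) -vis.
rewrite (fsbig_widen _ [set g | ext g /\ v \in g]) ?fsbig_finite //.
  by move=> g [ext_g /visitsP vis]; split => //; exact: visits_mem vis v_zs.
move=> g [[ext_g _] /= visNg]; case vis: (visits zs g); last by rewrite mul0r.
by case: visNg; split => //; apply/visitsP.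
Qed.

Lemma extremal_through_split v g : g \in extremal_through v ->
  exists p q, [/\ g = p ++ v :: q, v \notin p, v \notin q & ext (p ++ v :: q)].
Proof.
move=> /mem_extremal_through[ext_g v_g].
have := extremal_uniq ext_g; case/splitPr: v_g ext_g => p q ext_g.
rewrite cat_uniq /= negb_or => /and3P[_ /andP[vNp _] /andP[vNq _]].
by exists p, q.
Qed.

Definition extremal_pairs v : seq (seq V * seq V) :=
  [seq (g, d) | g <- extremal_through v, d <- extremal_through v].

Lemma extremal_pairs_split v pr : pr \in extremal_pairs v ->
  exists p q p' q', [/\ pr = (p ++ v :: q, p' ++ v :: q'), v \notin p, v \notin p',
    ext (p ++ v :: q) & ext (p' ++ v :: q')].
Proof.
move=> /allpairsP[[g d] [/= g_in d_in ->]].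
have [p [q [-> vNp _ ext_g]]] := extremal_through_split g_in.
have [p' [q' [-> vNp' _ ext_d]]] := extremal_through_split d_in.
by exists p, q, p', q'.
Qed.

Lemma sum_extremal_pairs_tail_swap v (F : seq V * seq V -> R) :
  \sum_(pr <- extremal_pairs v) F pr = \sum_(pr <- extremal_pairs v) F (tail_swap v pr).
Proof.
apply: big_seq_invol.
- by rewrite allpairs_uniq ?finmap.fset_uniq // => -[? ?] [? ?] _ _ [-> ->].
- move=> _ /extremal_pairs_split[p [q [p' [q' [-> vNp vNp' ext1 ext2]]]]].
  rewrite tail_swap_cat //; apply: allpairs_f; apply/mem_extremal_through.
  + by split; [exact: extremal_swap_tails ext1 ext2 | rewrite mem_cat mem_head orbT].
  + by split; [exact: extremal_swap_tails ext2 ext1 | rewrite mem_cat mem_head orbT].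
- move=> _ /extremal_pairs_split[p [q [p' [q' [-> vNp vNp' _ _]]]]].
  by rewrite !tail_swap_cat.
Qed.

Lemma mfun_split v zl zr :
  m (zl ++ v :: zr) * m [:: v] = m (zl ++ [:: v]) * m (v :: zr).
Proof.
rewrite !(mfunE (v := v)) ?mem_cat ?mem_head ?orbT // !mulr_suml.
under eq_bigr do rewrite mulr_sumr; under [RHS]eq_bigr do rewrite mulr_sumr.
have pairsE (H : seq V -> seq V -> R) :
    \sum_(g <- extremal_through v) \sum_(d <- extremal_through v) H g d =
    \sum_(pr <- extremal_pairs v) H pr.1 pr.2 by rewrite big_allpairs.
rewrite !pairsE sum_extremal_pairs_tail_swap.
apply: eq_big_seq => _ /extremal_pairs_split[p [q [p' [q' [-> vNp vNp' ext1 ext2]]]]].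
have [vNq vNq'] : v \notin q /\ v \notin q'.
  split; [move: (extremal_uniq ext1) | move: (extremal_uniq ext2)];
    by rewrite cat_uniq /= => /and3P[_ _ /andP[]].
rewrite tail_swap_cat //; cbn [fst snd]; rewrite visits1 mem_cat mem_head orbT visits_cat_mid //.
rewrite -(visits_prefix zl vNp vNq) -(visits_suffix zr vNp' vNq').
by rewrite mul1r -mulnb natrM -mulrA (Cpath_extremal_swap_tails fw gw ext1 ext2) mulrACA.
Qed.

Lemma mfun_ge0 zs : 0 <= m zs.
Proof. by apply: fsumr_ge0 => g [ext_g _]; exact: Cpath_extremal_ge0. Qed.

Lemma mfun_le1 v zs : v \in zs -> m zs <= m [:: v].
Proof.
move=> v_zs; rewrite (mfunE v_zs) (mfunE (mem_head v [::])) !big_seq.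
apply: ler_sum => g /mem_extremal_through[ext_g v_g]; rewrite visits1 v_g mul1r.
by case: (visits zs g); rewrite ?mul1r ?mul0r ?Cpath_extremal_ge0.
Qed.

Lemma mfun_chain (x : nat -> V) n : (1 <= n)%N ->
  m [seq x i | i <- iota 0 n.+1] =
    (\prod_(i < n) m [:: x i; x i.+1]) / (\prod_(1 <= i < n) m [:: x i]).
Proof.
elim: n => [//|[|n] IH] _; first by rewrite big_ord1 big_geq // divr1.
have iotaS k : [seq x i | i <- iota 0 k.+1] = [seq x i | i <- iota 0 k] ++ [:: x k].
  by rewrite -addn1 iotaD map_cat.
rewrite (iotaS n.+2) (iotaS n.+1) -catA cat1s.
rewrite big_ord_recr big_nat_recr // [RHS]/=.
(* If m(x_(n+1)) = 0 the right-hand side is 0 (x / 0 = 0), and so is the left one. *)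
have [m0|m_neq0] := eqVneq (m [:: x n.+1]) 0.
  rewrite m0 mulr0 invr0 mulr0; apply/eqP; rewrite eq_le mfun_ge0 andbT -m0.
  by apply: mfun_le1; rewrite mem_cat !inE eqxx !orbT.
by rewrite -[LHS](mulfK m_neq0) mfun_split -iotaS IH // invfM; ring.
Qed.

End ProductFormula.

Theorem proposition3p6 (R : realType) (V : choiceType) (adj : rel V)
    (f : R -> V -> R) (g : R -> V -> V -> R) (h : R -> V -> V -> V -> R)
    (m : nat) (x : nat -> V) :
  symmetric_graph adj -> irreflexive_graph adj ->
  locally_finite adj -> connected_graph adj ->
  W1plus_geodesic adj f g h ->
  (1 <= m)%N ->
  (forall i, (i < m)%N -> ole adj (f 0) (f 1) (x i) (x i.+1)) ->
  mfun adj (f 0) (f 1) (f 0) (g 0) [seq x i | i <- iota 0 m.+1] =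
    (\prod_(i < m) mfun adj (f 0) (f 1) (f 0) (g 0) [:: x i; x i.+1]) /
    (\prod_(1 <= i < m) mfun adj (f 0) (f 1) (f 0) (g 0) [:: x i]).
Proof.
move=> _ _ lfin conn [f_fdist _ [_ _ g_gt0 _]] m_ge1 _.
have fd0 : is_fdist (f 0) by apply: f_fdist; rewrite lexx ler01.
have fd1 : is_fdist (f 1) by apply: f_fdist; rewrite ler01 lexx.
apply: mfun_chain m_ge1.
- by move=> [//|y s] [ys _ _]; apply: (oriented_path_uniq conn ys).
- by move=> v; exact: extremal_paths_finite.
- move=> [//|y s] [ys _ _]; apply: Cpath_ge0 ys; first by case: fd0.
  by move=> a b /asboolP ab; apply: g_gt0; rewrite ?lexx ?ler01.
Qed.
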